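(* Let $R$ be a finite commutative local principal ideal ring with unity. Then the complement $\overline{\Gamma(R)}$ of the zero divisor graph of $R$ is a divisor graph.
   Context: For a commutative ring $S$ with unity, $Z(S)$ denotes its set of zero divisors. The zero divisor graph $\Gamma(S)$ is the simple graph whose vertex set is $Z(S)\setminus\{0\}$, two distinct vertices $a,b$ being adjacent iff $ab=0$. Its complement $\overline{\Gamma(S)}$ has the same vertex set, two distinct vertices $a,b$ being adjacent iff $ab\neq 0$. For a nonempty set $S$ of positive integers, the divisor graph $G(S)$ has vertex set $S$, with distinct $i,j$ adjacent iff $i\mid j$ or $j\mid i$. A graph is a divisor graph if it is isomorphic to $G(S)$ for some nonempty set $S$ of positive integers. A ring is local if it has a unique maximal ideal. *)

From HB Require Import structures.
From mathcomp Require Import all_boot all_order all_algebra.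
Set Implicit Arguments. Unset Strict Implicit. Unset Printing Implicit Defensive.
Import GRing.Theory.
Local Open Scope ring_scope.

Section RingDefs.
Variable R : finComNzRingType.

(* An ideal of R (as a finite subset). Closure under r * a with r = -1 gives
   closure under negation, so this is an additive subgroup absorbing products. *)
Definition is_ideal (I : {set R}) : Prop :=
  [/\ 0 \in I,
      (forall a b, a \in I -> b \in I -> a + b \in I) &
      (forall r a, a \in I -> r * a \in I)].

Definition is_maximal_ideal (M : {set R}) : Prop :=
  [/\ is_ideal M, M != [set: R] &
      (forall J : {set R}, is_ideal J -> M \subset J -> J != [set: R] -> J = M)].

Definition is_local_ring : Prop :=
  exists M : {set R}, is_maximal_ideal M /\
    forall N : {set R}, is_maximal_ideal N -> N = M.

Definition principal_ideal (a : R) : {set R} := [set r * a | r : R].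

Definition is_PIR : Prop :=
  forall I : {set R}, is_ideal I -> exists a : R, I = principal_ideal a.

Definition zero_divisors : {set R} :=
  [set a : R | [exists b : R, (b != 0) && (a * b == 0)]].

Definition zdg_vertices : {set R} := zero_divisors :\ 0.

Definition compl_zdg_adj : rel R := fun a b => (a != b) && (a * b != 0).
End RingDefs.

(* A graph with finite vertex set V and adjacency adj is a divisor graph iff it
   is isomorphic to G(S) for a set S of positive integers: an isomorphism is an
   injective map f : V -> positive integers (S := f @: V), such that distinct
   x, y are adjacent iff f x | f y or f y | f x. *)
Definition is_divisor_graph (T : finType) (V : {set T}) (adj : rel T) : Prop :=
  exists f : T -> nat,
    [/\ {in V &, injective f},
        (forall x, x \in V -> (0 < f x)%N) &
        (forall x y, x \in V -> y \in V -> x != y ->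
           (adj x y <-> ((f x %| f y) || (f y %| f x))%N))].

From HB Require Import structures.
From mathcomp Require Import all_boot all_order all_algebra.
From Stdlib Require Import Classical.
Set Implicit Arguments. Unset Strict Implicit. Unset Printing Implicit Defensive.
Import GRing.Theory.

(* In a finite local principal ideal ring any two elements are comparable for
   divisibility, so the annihilators form a chain.  Hence in the complement of
   the zero divisor graph the elements with nonzero square form a clique, those
   with zero square form an independent set, and the clique neighbours of an
   element of the independent set form an initial segment for the size of the
   annihilator: the graph is a threshold graph.  A threshold graph is a divisor
   graph: refine the threshold order to an injective e and send a clique vertex
   x to 2^(e(x)+1); send an independent vertex y to 2^t(y) 3^i(y) 5^(n - i(y)),
   where 2^t(y) is the largest code of a neighbour of y and i is injective with
   values below n, so that these codes are pairwise incomparable and divide no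
   power of 2. *)

Definition pow235 (a b c : nat) : nat := 2 ^ a * 3 ^ b * 5 ^ c.

Lemma pow235_gt0 a b c : 0 < pow235 a b c.
Proof. by rewrite !muln_gt0 !expn_gt0. Qed.

Lemma logn_pow235 p a b c :
  logn p (pow235 a b c) = a * (p == 2) + b * (p == 3) + c * (p == 5).
Proof. by rewrite !lognM ?muln_gt0 ?expn_gt0 // !lognX !logn_prime. Qed.

Lemma dvdn_pow235 a b c a' b' c' :
  (pow235 a b c %| pow235 a' b' c') = [&& a <= a', b <= b' & c <= c'].
Proof.
apply/idP/and3P => [dvd_abc | [le_a le_b le_c]]; last first.
  by rewrite !dvdn_mul ?dvdn_exp2l.
have le_logn p : logn p (pow235 a b c) <= logn p (pow235 a' b' c').
  by rewrite dvdn_leq_log ?pow235_gt0.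
move: (le_logn 2) (le_logn 3) (le_logn 5).
by rewrite !logn_pow235 /= !muln1 !muln0 !addn0 !add0n.
Qed.

Lemma exists_injective_refinement (T : finType) (w : T -> nat) :
  exists2 e : T -> nat, injective e & forall x y, e x <= e y -> w x <= w y.
Proof.
exists (fun x => w x * #|T| + enum_rank x) => [x y | x y].
  move=> /(congr1 (modn^~ #|T|)); rewrite !modnMDl !modn_small ?ltn_ord //.
  by move=> /val_inj/enum_rank_inj.
have T_gt0 : 0 < #|T| by apply: leq_ltn_trans (ltn_ord (enum_rank x)).
move=> /(leq_div2r #|T|); rewrite !divnMDl // !divn_small ?ltn_ord //.
by rewrite !addn0.
Qed.

Section ThresholdGraph.
Variables (T : finType) (V : {set T}) (adj : rel T) (low : pred T) (e : T -> nat).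
Hypothesis adj_sym : {in V &, symmetric adj}.
Hypothesis e_inj : {in V &, injective e}.
Hypothesis low_adj : {in V &, forall x y, low x -> low y -> x != y -> adj x y}.
Hypothesis high_nadj : {in V &, forall x y, ~~ low x -> ~~ low y -> ~~ adj x y}.
Hypothesis adj_downward : forall x x' y, x \in V -> x' \in V -> y \in V ->
  low x -> low x' -> ~~ low y -> e x' <= e x -> adj x y -> adj x' y.

Let threshold (y : T) : nat := \max_(x in V | low x && adj x y) (e x).+1.

Lemma ltn_threshold x y : x \in V -> y \in V -> low x -> ~~ low y ->
  (e x < threshold y) = adj x y.
Proof.
move=> xV yV lx ly; apply/idP/idP => [|xy]; last first.
  by apply: (leq_bigmax_cond x); rewrite xV lx.
apply: contraTT => nxy; rewrite -leqNgt; apply/bigmax_leqP => x' /andP[x'V /andP[lx' x'y]].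
by rewrite ltnNge; apply: contra nxy => le_xx'; apply: (adj_downward x'V).
Qed.

Let code (x : T) : nat :=
  if low x then pow235 (e x).+1 0 0
  else pow235 (threshold x) (enum_rank x) (#|T| - enum_rank x).

Lemma dvdn_code x y : x \in V -> y \in V ->
  (code x %| code y) = if low x then (if low y then e x <= e y else adj x y) else x == y.
Proof.
move=> xV yV; case: (eqVneq x y) => [<-|nxy]; first by rewrite dvdnn leqnn; case: (low x).
rewrite /code; case: (boolP (low x)); case: (boolP (low y)) => ly lx; rewrite dvdn_pow235.
- by rewrite ltnS !andbT.
- by rewrite !andbT ltn_threshold.
- by apply/and3P => -[_ _]; rewrite leqNgt subn_gt0 ltn_ord.
- apply/and3P => -[_ le_rank]; rewrite leq_sub2lE => [ge_rank|]; last exact/ltnW/ltn_ord.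
  apply: (negP nxy); apply/eqP/enum_rank_inj/val_inj/eqP.
  by rewrite eqn_leq le_rank ge_rank.
Qed.

Lemma threshold_divisor_graph : is_divisor_graph V adj.
Proof.
exists code; split.
- move=> x y xV yV eq_code.
  move: (dvdn_code xV yV) (dvdn_code yV xV); rewrite eq_code dvdnn.
  case: (low x); case: (low y) => //.
  + by move=> le_xy le_yx; apply: e_inj => //; apply/eqP; rewrite eqn_leq -le_xy -le_yx.
  + by move=> _ /esym/eqP.
  + by move=> /esym/eqP.
  + by move=> /esym/eqP.
- by move=> x _; rewrite /code; case: ifP => _; apply: pow235_gt0.
- move=> x y xV yV nxy; rewrite !dvdn_code // (negbTE nxy) eq_sym (negbTE nxy).
  case: (boolP (low x)); case: (boolP (low y)) => ly lx.
  + by rewrite leq_total low_adj.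
  + by rewrite orbF.
  + by rewrite adj_sym.
  + by rewrite (negbTE (high_nadj xV yV lx ly)).
Qed.

End ThresholdGraph.

Local Open Scope ring_scope.

Section LocalPIR.
Variable R : finComNzRingType.

Lemma mem_principal_ideal (a x : R) : x \in principal_ideal a <-> exists r, x = r * a.
Proof.
split; first by move=> /imsetP[r _ ->]; exists r.
by move=> [r ->]; apply/imsetP; exists r.
Qed.

Lemma principal_ideal_is_ideal (a : R) : is_ideal (principal_ideal a).
Proof.
split.
- by apply/mem_principal_ideal; exists 0; rewrite mul0r.
- move=> x y /mem_principal_ideal[r ->] /mem_principal_ideal[s ->].
  by apply/mem_principal_ideal; exists (r + s); rewrite mulrDl.
- move=> r x /mem_principal_ideal[s ->].
  by apply/mem_principal_ideal; exists (r * s); rewrite mulrA.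
Qed.

Lemma ideal_setT (I : {set R}) : is_ideal I -> 1 \in I -> I = [set: R].
Proof.
by move=> [_ _ I_mul] I1; apply/setP => r; rewrite inE -[r]mulr1 I_mul.
Qed.

Lemma proper_ideal_sub_maximal (I : {set R}) : is_ideal I -> I != [set: R] ->
  exists2 M, is_maximal_ideal M & I \subset M.
Proof.
have [n] := ubnP #|~: I|; elim: n I => // n IH I ltI idI ntI.
case: (classic (exists J, [/\ is_ideal J, I \proper J & J != [set: R]])).
  move=> [J [idJ ltIJ ntJ]].
  have ltJ : (#|~: J| < n)%N.
    by rewrite -ltnS (leq_trans _ ltI) // ltnS proper_card // properC.
  have [M maxM leJM] := IH J ltJ idJ ntJ.
  by exists M => //; apply: subset_trans (proper_sub ltIJ) leJM.
move=> noJ; exists I => //; split => // J idJ leIJ ntJ.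
apply: NNPP => neJI; apply: noJ; exists J; split => //.
by rewrite properEneq leIJ andbT eq_sym; apply/eqP.
Qed.

Lemma local_unit_or_unit1B : is_local_ring R ->
  forall x : R, (exists v, v * x = 1) \/ (exists v, v * (1 - x) = 1).
Proof.
move=> [M [[idM ntM _] M_uniq]] x.
have nonunit_mem y : ~ (exists v, v * y = 1) -> y \in M.
  move=> nuy; have ntY : principal_ideal y != [set: R].
    apply/negP => /eqP Yfull; apply: nuy.
    have /mem_principal_ideal[v v1] : 1 \in principal_ideal y by rewrite Yfull inE.
    by exists v.
  have [N maxN leYN] := proper_ideal_sub_maximal (principal_ideal_is_ideal y) ntY.
  rewrite -(M_uniq N maxN); apply: (subsetP leYN).
  by apply/mem_principal_ideal; exists 1; rewrite mul1r.
apply: NNPP => /not_or_and[nux nux']; move/eqP: ntM; apply.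
have [_ M_add _] := idM.
by apply: ideal_setT => //; rewrite -(subrK x 1) M_add ?nonunit_mem.
Qed.

Definition ideal2 (a b : R) : {set R} := [set r * a + s * b | r : R, s : R].

Lemma mem_ideal2 (a b x : R) : x \in ideal2 a b <-> exists r s, x = r * a + s * b.
Proof.
split; first by move=> /imset2P[r s _ _ ->]; exists r, s.
by move=> [r [s ->]]; apply/imset2P; exists r s.
Qed.

Lemma ideal2_is_ideal (a b : R) : is_ideal (ideal2 a b).
Proof.
split.
- by apply/mem_ideal2; exists 0, 0; rewrite !mul0r addr0.
- move=> x y /mem_ideal2[r [s ->]] /mem_ideal2[r' [s' ->]]; apply/mem_ideal2.
  by exists (r + r'), (s + s'); rewrite !mulrDl addrACA.
- move=> r x /mem_ideal2[r' [s' ->]]; apply/mem_ideal2.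
  by exists (r * r'), (r * s'); rewrite mulrDr !mulrA.
Qed.

Hypotheses (R_local : is_local_ring R) (R_PIR : is_PIR R).

Lemma principal_ideal_chain (a b : R) :
  a \in principal_ideal b \/ b \in principal_ideal a.
Proof.
have [c ab_c] := R_PIR (ideal2_is_ideal a b).
have [s aE] : exists s, a = s * c.
  apply/mem_principal_ideal; rewrite -ab_c; apply/mem_ideal2.
  by exists 1, 0; rewrite mul1r mul0r addr0.
have [t bE] : exists t, b = t * c.
  apply/mem_principal_ideal; rewrite -ab_c; apply/mem_ideal2.
  by exists 0, 1; rewrite mul1r mul0r add0r.
have [al [be cE]] : exists al be, c = al * a + be * b.
  by apply/mem_ideal2; rewrite ab_c; apply/mem_principal_ideal; exists 1; rewrite mul1r.
case: (local_unit_or_unit1B R_local (al * s)) => [[v vu] | [v vu]].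
- have c_a : c = v * al * a by rewrite aE mulrA -(mulrA v) vu mul1r.
  by right; apply/mem_principal_ideal; exists (t * (v * al)); rewrite bE {1}c_a mulrA.
- have c_bE : (1 - al * s) * c = be * b.
    by rewrite mulrBl mul1r -mulrA -aE {1}cE addrAC subrr add0r.
  have c_b : c = v * be * b by rewrite -mulrA -c_bE mulrA vu mul1r.
  by left; apply/mem_principal_ideal; exists (s * (v * be)); rewrite aE {1}c_b mulrA.
Qed.

Definition annihilator (x : R) : {set R} := [set y | x * y == 0].

Lemma annihilator_principal (a b : R) :
  a \in principal_ideal b -> annihilator b \subset annihilator a.
Proof.
move=> /mem_principal_ideal[r ->]; apply/subsetP => y; rewrite !inE => /eqP by0.
by rewrite -mulrA by0 mulr0.
Qed.

Lemma annihilator_sub_card (x y : R) :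
  (#|annihilator x| <= #|annihilator y|)%N -> annihilator x \subset annihilator y.
Proof.
move=> le_card; case: (principal_ideal_chain x y) => /annihilator_principal //.
by move=> le_yx; have /eqP -> : annihilator y == annihilator x by rewrite eqEcard le_yx.
Qed.

Lemma mul_neq0_of_sqr_neq0 (x y : R) : x * x != 0 -> y * y != 0 -> x * y != 0.
Proof.
move=> xx yy; case: (principal_ideal_chain x y) => /mem_principal_ideal[r rE].
- by apply: contra xx => /eqP xy0; rewrite {2}rE mulrCA xy0 mulr0.
- by apply: contra yy => /eqP xy0; rewrite {1}rE -mulrA xy0 mulr0.
Qed.

Lemma mul_eq0_of_sqr_eq0 (x y : R) : x * x = 0 -> y * y = 0 -> x * y = 0.
Proof.
move=> xx yy; case: (principal_ideal_chain x y) => /mem_principal_ideal[r ->].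
- by rewrite -mulrA yy mulr0.
- by rewrite mulrCA xx mulr0.
Qed.

End LocalPIR.

Theorem theorem2p1 (R : finComNzRingType) :
  is_local_ring R -> is_PIR R ->
  is_divisor_graph (zdg_vertices R) (@compl_zdg_adj R).
Proof.
move=> R_local R_PIR.
have [e e_inj e_ann] := exists_injective_refinement (fun x : R => #|annihilator x|).
apply: (@threshold_divisor_graph _ _ _ (fun x => x * x != 0) e).
- by move=> x y _ _; rewrite /compl_zdg_adj eq_sym mulrC.
- by move=> x y _ _; apply: e_inj.
- by move=> x y _ _ xx yy nxy; rewrite /compl_zdg_adj nxy mul_neq0_of_sqr_neq0.
- move=> x y _ _ /negPn/eqP xx /negPn/eqP yy.
  by rewrite /compl_zdg_adj mul_eq0_of_sqr_eq0 ?eqxx ?andbF.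
- move=> x x' y _ _ _ _ x'x' /negPn/eqP yy /e_ann le_card /andP[_ xy].
  have /subsetP sub_ann := annihilator_sub_card R_local R_PIR le_card.
  rewrite /compl_zdg_adj; apply/andP; split.
    by apply: contraTneq x'x' => ->; rewrite yy eqxx.
  by apply: contra xy => x'y; have := sub_ann y; rewrite !inE; apply.
Qed.
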